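(* Let $G$ be a finitely generated nilpotent group with lower central series $G=G_1\ge G_2\ge\cdots\ge G_{k+1}=\{1\}$, and let $\phi\in\operatorname{Aut}(G)$. For each $i$, let $B_i=G_i/G_{i+1}$, let $\theta_i$ be the automorphism of $B_i$ induced by $\phi$, let $\bar\theta_i$ be the automorphism induced by $\theta_i$ on $B_i/\mathrm{Tor}(B_i)\cong\mathbb{Z}^{m_i}$, and let $M_i\in\mathrm{GL}(m_i,\mathbb{Z})$ be the matrix of $\bar\theta_i$ with respect to a fixed basis. If all eigenvalues of $M_1$ have absolute value $1$, then for every $i$ all eigenvalues of $M_i$ have absolute value $1$.
   Context: $G_{i+1}=[G_i,G]$; each $G_i$ is characteristic so $\phi$ restricts to $G_i$ and induces automorphisms of the quotients. $\mathrm{Tor}(B)$ denotes the torsion subgroup of the finitely generated abelian group $B$. *)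

From HB Require Import structures.
From mathcomp Require Import all_boot all_order all_algebra all_field.
Set Implicit Arguments. Unset Strict Implicit. Unset Printing Implicit Defensive.
Import Order.TTheory GRing.Theory Num.Theory.

Structure grp := Grp {
  gcar :> Type;
  gmul : gcar -> gcar -> gcar;
  gone : gcar;
  ginv : gcar -> gcar;
  gmulA : forall x y z, gmul x (gmul y z) = gmul (gmul x y) z;
  gmul1g : forall x, gmul gone x = x;
  gmulVg : forall x, gmul (ginv x) x = gone }.

Section GroupDefs.
Variable G : grp.
Local Notation "x * y" := (gmul x y).
Local Notation "1" := (gone G).

Definition is_subgroup (H : G -> Prop) :=
  [/\ H 1, forall x y, H x -> H y -> H (x * y) & forall x, H x -> H (ginv x)].

Definition gen (S : G -> Prop) (x : G) : Prop :=
  forall H, is_subgroup H -> (forall y, S y -> H y) -> H x.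

Definition comm (x y : G) : G := ginv x * ginv y * x * y.

(* lcs n = G_{n+1}  (zero-based); lcs 0 = G, lcs (n+1) = [lcs n, G] *)
Fixpoint lcs (n : nat) : G -> Prop :=
  match n with
  | 0 => fun _ => True
  | n'.+1 => gen (fun c => exists x y, lcs n' x /\ c = comm x y)
  end.

(* Paper's indexing: LCS i = G_i, for i >= 1 (G_1 = G). *)
Definition LCS (i : nat) : G -> Prop := lcs i.-1.

Fixpoint gpow (x : G) (n : nat) : G :=
  match n with 0 => 1 | n'.+1 => x * gpow x n' end.

Definition gzpow (x : G) (z : int) : G :=
  match z with Posz n => gpow x n | Negz n => ginv (gpow x n.+1) end.

Definition finitely_generated :=
  exists n (f : 'I_n -> G), forall x, gen (fun y => exists j, y = f j) x.

Definition nilpotent := exists k, forall x, LCS k.+1 x -> x = 1.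

Definition group_hom (phi : G -> G) := forall x y, phi (x * y) = phi x * phi y.

(* preimage in G_i of Tor(B_i), B_i = G_i/G_{i+1} *)
Definition torG (i : nat) (x : G) : Prop :=
  LCS i x /\ exists n, (0 < n)%N /\ LCS i.+1 (gpow x n).

Definition prodz m (g : 'I_m -> G) (a : 'I_m -> int) : G :=
  foldr (fun j acc => gzpow (g j) (a j) * acc) 1 (enum 'I_m).

(* g_0,...,g_{m-1} in G_i whose images form a Z-basis of
   B_i/Tor(B_i) = G_i / torG i *)
Definition tf_basis (i m : nat) (g : 'I_m -> G) : Prop :=
  [/\ forall j, LCS i (g j),
      forall x, LCS i x -> exists a, torG i (x * ginv (prodz g a))
    & forall a b, torG i (prodz g a * ginv (prodz g b)) -> forall j, a j = b j].

(* M is the matrix of the automorphism induced by phi on B_i/Tor(B_i)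
   w.r.t. the basis g : row j of M = coordinates of the image of g_j *)
Definition induced_matrix (phi : G -> G) (i m : nat) (g : 'I_m -> G)
    (M : 'M[int]_m) : Prop :=
  forall j, torG i (phi (g j) * ginv (prodz g (fun k => M j k))).

End GroupDefs.

Definition cmx m (M : 'M[int]_m) : 'M[algC]_m := map_mx (fun z : int => (z%:~R)%R) M.

(* Let c_i be the coordinates on B_i / Tor(B_i) = Z^{m_i} in the given
   basis.  Modulo G_{i+1} the iterated commutator [x_1, ..., x_i] is
   multiplicative in each x_j and trivial as soon as some x_j lies in G_2
   (three-subgroup lemma), so c_i of it is a multilinear function of the level-1
   coordinates of the x_j; and these commutators generate G_i modulo G_{i+1}.
   Hence if the powers of M_1 grow polynomially, so does c_i (phi^n x) for every
   x in G_i, i.e. so do the powers of M_i.  For an integer matrix, polynomial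
   growth of its powers is equivalent to all eigenvalues having modulus at most
   1 (Cayley-Hamilton one way, an eigenvector the other).  Applying this to phi
   and phi^-1, whose matrices at each level are mutually inverse, puts every
   eigenvalue of M_i on the unit circle. *)

From mathcomp Require Import all_boot all_order all_algebra all_field.
From mathcomp Require Import zify ring.
From Stdlib Require Import ClassicalEpsilon.
Import Order.TTheory GRing.Theory Num.Theory.
Set Implicit Arguments. Unset Strict Implicit. Unset Printing Implicit Defensive.

Notation "x ** y" := (gmul x y) (at level 40, left associativity).

Section GroupBasics.
Variable G : grp.
Local Notation one := (gone G).
Implicit Types x y z : G.

Lemma gmulKg x y : ginv x ** (x ** y) = y.
Proof. by rewrite gmulA gmulVg gmul1g. Qed.

Lemma gmulgV x : x ** ginv x = one.
Proof.
have idem : (x ** ginv x) ** (x ** ginv x) = x ** ginv x.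
  by rewrite -gmulA (gmulA (ginv x)) gmulVg gmul1g.
by rewrite -[LHS]gmul1g -(gmulVg (x ** ginv x)) -gmulA idem.
Qed.

Lemma gmulg1 x : x ** one = x.
Proof. by rewrite -(gmulVg x) gmulA gmulgV gmul1g. Qed.

Lemma gmulKVg x y : x ** (ginv x ** y) = y.
Proof. by rewrite gmulA gmulgV gmul1g. Qed.

Lemma ginv_unique x y : x ** y = one -> x = ginv y.
Proof. by move=> xy1; rewrite -[x]gmulg1 -(gmulgV y) gmulA xy1 gmul1g. Qed.

Lemma ginvK x : ginv (ginv x) = x.
Proof. by symmetry; apply: ginv_unique; apply: gmulgV. Qed.

Lemma ginvM x y : ginv (x ** y) = ginv y ** ginv x.
Proof.
by symmetry; apply: ginv_unique; rewrite -gmulA (gmulA (ginv x)) gmulVg gmul1g gmulVg.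
Qed.

Lemma ginv1 : ginv one = one.
Proof. by symmetry; apply: ginv_unique; rewrite gmul1g. Qed.

Lemma gmulI x y z : x ** y = x ** z -> y = z.
Proof. by move=> e; rewrite -(gmulKg x y) e gmulKg. Qed.

End GroupBasics.

Ltac gsimpl := rewrite ?ginvM ?ginvK ?ginv1; rewrite -?gmulA;
  repeat rewrite ?gmulKg ?gmulKVg ?gmulVg ?gmulgV ?gmul1g ?gmulg1 ?ginv1; try done.

Section GroupTheory.
Variable G : grp.
Local Notation one := (gone G).
Implicit Types x y z w : G.

Definition prodz_seq (I : Type) (s : seq I) (g : I -> G) (a : I -> int) :=
  foldr (fun j acc => gzpow (g j) (a j) ** acc) one s.

Lemma prodzE m (g : 'I_m -> G) a : prodz g a = prodz_seq (enum 'I_m) g a.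
Proof. by []. Qed.

Lemma eq_prodz_seq (I : Type) (s : seq I) (g : I -> G) a b :
  a =1 b -> prodz_seq s g a = prodz_seq s g b.
Proof. by move=> ab; elim: s => //= j s ->; rewrite ab. Qed.

Definition gconj x y := ginv y ** x ** y.
Definition is_normal (N : G -> Prop) := forall x y, N x -> N (gconj x y).
Definition eqmod (N : G -> Prop) x y := N (x ** ginv y).

Lemma gconjK x y : gconj (gconj x (ginv y)) y = x. Proof. rewrite /gconj; gsimpl. Qed.
Lemma gconjM x y z : gconj (x ** y) z = gconj x z ** gconj y z. Proof. rewrite /gconj; gsimpl. Qed.
Lemma gconjV x y : gconj (ginv x) y = ginv (gconj x y). Proof. rewrite /gconj; gsimpl. Qed.
Lemma gconj1 y : gconj one y = one. Proof. rewrite /gconj; gsimpl. Qed.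
Lemma gconj_comm x y z : gconj (comm x y) z = comm (gconj x z) (gconj y z).
Proof. rewrite /gconj /comm; gsimpl. Qed.
Lemma gconjE x y : gconj x y = x ** comm x y. Proof. rewrite /gconj /comm; gsimpl. Qed.
Lemma commE x y : comm x y = ginv x ** gconj x y. Proof. rewrite /gconj /comm; gsimpl. Qed.
Lemma ginv_comm x y : ginv (comm x y) = comm y x. Proof. rewrite /comm; gsimpl. Qed.
Lemma comm1l x : comm one x = one. Proof. rewrite /comm; gsimpl. Qed.
Lemma comm1r x : comm x one = one. Proof. rewrite /comm; gsimpl. Qed.
Lemma commMl x y z : comm (x ** y) z = gconj (comm x z) y ** comm y z.
Proof. rewrite /gconj /comm; gsimpl. Qed.
Lemma commMr x y z : comm x (y ** z) = comm x z ** gconj (comm x y) z.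
Proof. rewrite /gconj /comm; gsimpl. Qed.
Lemma commVr x y : comm x (ginv y) = gconj (ginv (comm x y)) (ginv y).
Proof. rewrite /gconj /comm; gsimpl. Qed.

Lemma hall_witt x y z :
  gconj (comm (comm x (ginv y)) z) y ** gconj (comm (comm y (ginv z)) x) z
  ** gconj (comm (comm z (ginv x)) y) x = one.
Proof. rewrite /gconj /comm; gsimpl. Qed.

Section Subgroup.
Variables (H : G -> Prop) (sgH : is_subgroup H).

Lemma subgroup1 : H one. Proof. by case: sgH. Qed.
Lemma subgroupM x y : H x -> H y -> H (x ** y). Proof. by case: sgH => _ + _; apply. Qed.
Lemma subgroupV x : H x -> H (ginv x). Proof. by case: sgH => _ _; apply. Qed.
Lemma subgroupMr x y : H y -> H (x ** y) -> H x.
Proof.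
by move=> Hy Hxy; have := subgroupM Hxy (subgroupV Hy); rewrite -gmulA gmulgV gmulg1.
Qed.

Lemma subgroup_gpow x n : H x -> H (gpow x n).
Proof. by move=> Hx; elim: n => [|n IH] /=; [exact: subgroup1 | exact: subgroupM]. Qed.
Lemma subgroup_gzpow x a : H x -> H (gzpow x a).
Proof.
by move=> Hx; case: a => n; [exact: subgroup_gpow | exact: subgroupV (subgroup_gpow _ Hx)].
Qed.
Lemma subgroup_prodz_seq (I : Type) (s : seq I) (g : I -> G) a :
  (forall j, H (g j)) -> H (prodz_seq s g a).
Proof.
move=> Hg; elim: s => [|j s IH] /=; first exact: subgroup1.
by apply: subgroupM => //; apply: subgroup_gzpow.
Qed.

Lemma eqmod_refl x : eqmod H x x. Proof. by rewrite /eqmod gmulgV; apply: subgroup1. Qed.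
Lemma eqmod_sym x y : eqmod H x y -> eqmod H y x.
Proof. by rewrite /eqmod => /subgroupV; rewrite ginvM ginvK. Qed.
Lemma eqmod_trans x y z : eqmod H x y -> eqmod H y z -> eqmod H x z.
Proof. by rewrite /eqmod => Hxy Hyz; have := subgroupM Hxy Hyz; rewrite -gmulA gmulKg. Qed.
Lemma eqmod_mem x y : eqmod H x y -> H y -> H x.
Proof. by rewrite /eqmod => Hxy Hy; apply: subgroupMr Hxy; apply: subgroupV. Qed.

Hypothesis nH : is_normal H.

Lemma eqmodM x x' y y' : eqmod H x x' -> eqmod H y y' -> eqmod H (x ** y) (x' ** y').
Proof.
rewrite /eqmod => Hx Hy.
have -> : x ** y ** ginv (x' ** y') = gconj (y ** ginv y') (ginv x) ** (x ** ginv x').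
  by rewrite /gconj; gsimpl.
by apply: subgroupM; [apply: nH | ].
Qed.
Lemma eqmod_drop x d y : H d -> eqmod H (x ** d ** y) (x ** y).
Proof.
move=> Hd; rewrite /eqmod.
have -> : x ** d ** y ** ginv (x ** y) = gconj d (ginv x) by rewrite /gconj; gsimpl.
exact: nH.
Qed.
Lemma eqmod_dropl d y : H d -> eqmod H (d ** y) y.
Proof. by move=> Hd; have := eqmod_drop one y Hd; rewrite !gmul1g. Qed.
Lemma eqmod_dropr x d : H d -> eqmod H (x ** d) x.
Proof. by move=> Hd; have := eqmod_drop x one Hd; rewrite !gmulg1. Qed.

End Subgroup.

Lemma gen_subgroup (S : G -> Prop) : is_subgroup (gen S).
Proof.
split.
- by move=> H [H1 _ _] _.
- by move=> x y Sx Sy H sgH SH; apply: (subgroupM sgH); [apply: Sx | apply: Sy].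
- by move=> x Sx H sgH SH; apply: (subgroupV sgH); apply: Sx.
Qed.

Local Notation L := (@lcs G).

Lemma lcs_comm k x y : L k x -> L k.+1 (comm x y).
Proof. by move=> Lx H _ SH; apply: SH; exists x, y. Qed.

Lemma lcs_subgroup_normal k : is_subgroup (L k) /\ is_normal (L k).
Proof.
elim: k => [|k [sgL nL]]; first by split; [split | ].
split; first exact: gen_subgroup.
move=> x y Lx; apply: (Lx (fun v => L k.+1 (gconj v y))); last first.
  by move=> _ [a [b [La ->]]]; rewrite gconj_comm; apply: lcs_comm; exact: nL.
have sgL1 := gen_subgroup (fun c => exists x y, L k x /\ c = comm x y).
split => /= [|a b La Lb|a La]; rewrite ?gconj1 ?gconjM ?gconjV.
- exact (subgroup1 sgL1).
- exact (subgroupM sgL1 La Lb).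
- exact (subgroupV sgL1 La).
Qed.

Lemma lcs_subgroup k : is_subgroup (L k). Proof. by case: (lcs_subgroup_normal k). Qed.
Lemma lcs_normal k : is_normal (L k). Proof. by case: (lcs_subgroup_normal k). Qed.

Lemma lcs1 k : L k one. Proof. exact (subgroup1 (lcs_subgroup k)). Qed.
Lemma lcsM k x y : L k x -> L k y -> L k (x ** y).
Proof. by move=> Lx Ly; exact (subgroupM (lcs_subgroup k) Lx Ly). Qed.
Lemma lcsV k x : L k x -> L k (ginv x).
Proof. by move=> Lx; exact (subgroupV (lcs_subgroup k) Lx). Qed.
Lemma lcsJ k x y : L k x -> L k (gconj x y). Proof. exact: (@lcs_normal k x y). Qed.

Lemma lcsS k x : L k.+1 x -> L k x.
Proof.
move=> Lx; apply: (Lx (L k)); first exact: lcs_subgroup.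
by move=> _ [a [b [La ->]]]; rewrite commE; apply: lcsM; [apply: lcsV | apply: lcsJ].
Qed.

Lemma eqmod_lcs_commute k x y : L k x -> eqmod (L k.+1) (x ** y) (y ** x).
Proof.
move=> Lx; rewrite /eqmod.
have -> : x ** y ** ginv (y ** x) = comm (ginv x) (ginv y) by rewrite /comm; gsimpl.
by apply: lcs_comm; apply: lcsV.
Qed.

Lemma eqmod_commMl k x y z : L k x -> L k y ->
  eqmod (L k.+2) (comm (x ** y) z) (comm x z ** comm y z).
Proof.
move=> Lx Ly; rewrite commMl gconjE.
apply: (eqmod_drop (@lcs_normal k.+2)).
by apply: lcs_comm; apply: lcs_comm.
Qed.

Lemma eqmod_commMr k x y z : L k x ->
  eqmod (L k.+2) (comm x (y ** z)) (comm x y ** comm x z).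
Proof.
move=> Lx; rewrite commMr gconjE gmulA.
have sgL := @lcs_subgroup k.+2; have nL := @lcs_normal k.+2.
apply: (eqmod_trans sgL (_ : eqmod _ _ (comm x z ** comm x y))).
  by apply: (eqmod_dropr nL); apply: lcs_comm; apply: lcs_comm.
by apply: eqmod_lcs_commute; apply: lcs_comm.
Qed.

(* The three-subgroup lemma [G_{k+1}, G_2] <= G_{k+3}, via Hall-Witt. *)
Lemma lcs_comm_lcs1 k x u : L k x -> L 1 u -> L k.+2 (comm x u).
Proof.
move=> Lx L1u.
pose S u := forall x, L k x -> L k.+2 (comm x u).
suff : S u by apply.
have sgS : is_subgroup S.
  split => [x0 _|a b Sa Sb x0 Lx0|a Sa x0 Lx0].
  - by rewrite comm1r; apply: lcs1.
  - by rewrite commMr; apply: lcsM; [apply: Sb | apply: lcsJ; apply: Sa].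
  - by rewrite commVr; apply: lcsJ; apply: lcsV; apply: Sa.
apply: (L1u S) => // _ [a [b [_ ->]]] x0 Lx0.
rewrite -ginv_comm; apply: lcsV.
have hw := hall_witt a (ginv b) x0; rewrite ginvK in hw.
set X := gconj (comm (comm a b) x0) (ginv b) in hw.
have L2 : L k.+2 (gconj (comm (comm (ginv b) (ginv x0)) a) x0).
  apply: lcsJ; apply: lcs_comm; rewrite -ginv_comm; apply: lcsV.
  by apply: lcs_comm; apply: lcsV.
have L3 : L k.+2 (gconj (comm (comm x0 (ginv a)) (ginv b)) a).
  by apply: lcsJ; apply: lcs_comm; apply: lcs_comm.
have LX : L k.+2 X.
  have sgL := lcs_subgroup k.+2.
  apply: (subgroupMr sgL L2); apply: (subgroupMr sgL L3).
  by rewrite hw; apply: lcs1.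
by rewrite -[comm _ _](gconjK _ b); apply: lcsJ.
Qed.

Section Hom.
Variables (f : G -> G) (fM : group_hom f).

Lemma hom1 : f one = one.
Proof. by apply: (@gmulI _ (f one)); rewrite -fM !gmulg1. Qed.
Lemma homV x : f (ginv x) = ginv (f x).
Proof. by apply: ginv_unique; rewrite -fM gmulVg hom1. Qed.
Lemma hom_comm x y : f (comm x y) = comm (f x) (f y).
Proof. by rewrite /comm !fM !homV. Qed.
Lemma hom_gpow x n : f (gpow x n) = gpow (f x) n.
Proof. by elim: n => [|n IH] /=; rewrite ?hom1 // fM IH. Qed.
Lemma hom_gzpow x a : f (gzpow x a) = gzpow (f x) a.
Proof. by case: a => n; rewrite /gzpow ?homV hom_gpow. Qed.
Lemma hom_prodz_seq (I : Type) (s : seq I) (g : I -> G) a :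
  f (prodz_seq s g a) = prodz_seq s (fun j => f (g j)) a.
Proof. by elim: s => [|j s IH] /=; rewrite ?hom1 // fM IH hom_gzpow. Qed.

Lemma lcs_hom k x : L k x -> L k (f x).
Proof.
elim: k x => [|k IH] x //= Lx.
apply: (Lx (fun v => L k.+1 (f v))); last first.
  by move=> _ [a [b [La ->]]]; rewrite hom_comm; apply: lcs_comm; apply: IH.
split => /= [|a b La Lb|a La]; rewrite ?hom1 ?fM ?homV.
- exact (@lcs1 k.+1).
- exact (@lcsM k.+1 _ _ La Lb).
- exact (@lcsV k.+1 _ La).
Qed.

Lemma iter_hom n : group_hom (iter n f).
Proof. by elim: n => [|n IH] x y //=; rewrite IH fM. Qed.

End Hom.

End GroupTheory.

Section IteratedCommutators.
Variable G : grp.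
Local Notation one := (gone G).
Local Notation L := (@lcs G).
Implicit Types x y w : G.

Definition itcomm (r : seq G) w := foldl (@comm G) w r.

Lemma itcomm_lcs r k w : L k w -> L (k + size r) (itcomm r w).
Proof.
elim: r k w => [|z r IH] k w Lw /=; first by rewrite addn0.
by rewrite -addSnnS; apply: IH; apply: lcs_comm.
Qed.

Lemma itcomm1 r : itcomm r one = one.
Proof. by elim: r => [|z r IH] //=; rewrite comm1l. Qed.

Lemma itcomm_hom (f : G -> G) (fM : group_hom f) r w :
  f (itcomm r w) = itcomm (map f r) (f w).
Proof. by elim: r w => [|z r IH] w //=; rewrite IH (hom_comm fM). Qed.

Lemma eqmod_morph_mod (f : G -> G) k j :
  (forall w w', L k w -> L k w' -> eqmod (L j) (f (w ** w')) (f w ** f w')) ->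
  (forall d, L k.+1 d -> L j (f d)) ->
  forall w w', L k w -> L k w' -> eqmod (L k.+1) w w' -> eqmod (L j) (f w) (f w').
Proof.
move=> fM fL w w' Lw Lw' ww'.
have -> : w = (w ** ginv w') ** w' by gsimpl.
apply: (eqmod_trans (@lcs_subgroup _ j) (fM _ _ (lcsS ww') Lw')).
by apply: (eqmod_dropl (@lcs_normal _ j)); apply: fL.
Qed.

Lemma itcommM_mod r k w w' : L k w -> L k w' ->
  eqmod (L (k + size r).+1) (itcomm r (w ** w')) (itcomm r w ** itcomm r w').
Proof.
elim: r k w w' => [|z r IH] k w w' Lw Lw'.
  by rewrite addn0; apply: eqmod_refl; apply: lcs_subgroup.
rewrite /= -addSnnS.
have sgL := @lcs_subgroup G (k.+1 + size r).+1.
have Lcomm v : L k v -> L k.+1 (comm v z) by apply: lcs_comm.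
apply: (eqmod_trans sgL (_ : eqmod _ _ (itcomm r (comm w z ** comm w' z)))); last first.
  by apply: IH; apply: Lcomm.
apply: (eqmod_morph_mod (IH k.+1)).
- by move=> d Ld; rewrite -addSn; apply: itcomm_lcs.
- by apply: Lcomm; apply: lcsM.
- by apply: lcsM; apply: Lcomm.
- exact: eqmod_commMl.
Qed.

Lemma itcomm_eqmod r k w w' : L k w -> L k w' -> eqmod (L k.+1) w w' ->
  eqmod (L (k + size r).+1) (itcomm r w) (itcomm r w').
Proof.
apply: eqmod_morph_mod; first exact: itcommM_mod.
by move=> d Ld; rewrite -addSn; apply: itcomm_lcs.
Qed.

Lemma itcommV_mod r k w : L k w ->
  eqmod (L (k + size r).+1) (itcomm r (ginv w)) (ginv (itcomm r w)).
Proof.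
move=> Lw; have := itcommM_mod (r := r) (lcsV Lw) Lw.
by rewrite gmulVg itcomm1 /eqmod gmul1g ginvK => /lcsV; rewrite ginvK.
Qed.

End IteratedCommutators.

Section Powers.
Variable G : grp.
Local Notation one := (gone G).
Local Notation L := (@lcs G).
Implicit Types x y : G.

Lemma gpowD x n m : gpow x (n + m) = gpow x n ** gpow x m.
Proof. by elim: n => [|n IH] /=; rewrite ?gmul1g // IH gmulA. Qed.

Lemma gpowSr x n : gpow x n.+1 = gpow x n ** x.
Proof. by rewrite -addn1 gpowD /= gmulg1. Qed.

Lemma gpowM x n m : gpow x (n * m) = gpow (gpow x n) m.
Proof. by elim: m => [|m IH]; rewrite ?muln0 // mulnS gpowD IH. Qed.

Lemma gpowV x n : ginv (gpow x n) = gpow (ginv x) n.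
Proof. by elim: n => [|n IH] /=; rewrite ?ginv1 // ginvM IH -gpowSr. Qed.

Lemma gpow_conj x y n : gconj (gpow x n) y = gpow (gconj x y) n.
Proof. by elim: n => [|n IH] /=; rewrite ?gconj1 // gconjM IH. Qed.

Lemma gpowM_mod k x y n : L k x -> L k y ->
  eqmod (L k.+1) (gpow (x ** y) n) (gpow x n ** gpow y n).
Proof.
move=> Lx Ly; have sgL := @lcs_subgroup G k.+1; have nL := @lcs_normal G k.+1.
have refl := eqmod_refl sgL.
elim: n => [|n IH] /=; first by rewrite gmulg1; apply: refl.
apply: (eqmod_trans sgL (eqmodM sgL nL (refl (x ** y)) IH)).
have -> : x ** y ** (gpow x n ** gpow y n) = x ** (y ** gpow x n) ** gpow y n by gsimpl.
have -> : x ** gpow x n ** (y ** gpow y n) = x ** (gpow x n ** y) ** gpow y n by gsimpl.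
apply: (eqmodM sgL nL _ (refl _)); apply: (eqmodM sgL nL (refl _)).
apply: (eqmod_sym sgL); apply: eqmod_lcs_commute.
exact: (subgroup_gpow (@lcs_subgroup G k)).
Qed.

Local Open Scope ring_scope.

Lemma gzpow_subn x n m : gzpow x (n%:Z - m%:Z) = gpow x n ** ginv (gpow x m).
Proof.
elim: m n => [|m IH] n; first by rewrite subr0 /= ginv1 gmulg1.
case: n => [|n].
  have -> : 0%:Z - m.+1%:Z = Negz m by rewrite NegzE; lia.
  by rewrite /= gmul1g.
have -> : n.+1%:Z - m.+1%:Z = n%:Z - m%:Z by lia.
by rewrite IH gpowSr (gpowSr x m); gsimpl.
Qed.

Lemma gzpowD x (a b : int) : gzpow x (a + b) = gzpow x a ** gzpow x b.
Proof.
have int_diff (c : int) : exists p q : nat, c = p%:Z - q%:Z.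
  by case: c => n; [exists n, 0%N | exists 0%N, n.+1]; lia.
have [p1 [q1 ->]] := int_diff a; have [p2 [q2 ->]] := int_diff b.
have -> : p1%:Z - q1%:Z + (p2%:Z - q2%:Z) = (p1 + p2)%N%:Z - (q2 + q1)%N%:Z by lia.
rewrite !gzpow_subn !gpowD.
have comm_pow : ginv (gpow x q1) ** gpow x p2 = gpow x p2 ** ginv (gpow x q1).
  apply: (@gmulI _ (gpow x q1)).
  by rewrite gmulA gmulgV gmul1g gmulA -gpowD addnC gpowD; gsimpl.
rewrite ginvM [RHS]gmulA -[gpow x p1 ** _ ** gpow x p2]gmulA comm_pow; gsimpl.
Qed.

End Powers.

Section Torsion.
Variables (G : grp) (K : nat).
Local Notation L := (@lcs G).
Local Notation T := (@torG G K.+1).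

Lemma torG_subgroup : is_subgroup T.
Proof.
split.
- by split; [exact: lcs1 | exists 1%N; rewrite /= gmulg1; split => //; apply: lcs1].
- move=> x y [Lx [n [n0 Lxn]]] [Ly [m [m0 Lym]]]; split; first exact: lcsM.
  exists (n * m)%N; split; first by rewrite muln_gt0 n0.
  apply: (eqmod_mem (@lcs_subgroup _ _) (gpowM_mod _ Lx Ly)).
  apply: lcsM; first by rewrite gpowM; apply: (subgroup_gpow (@lcs_subgroup _ _)).
  by rewrite mulnC gpowM; apply: (subgroup_gpow (@lcs_subgroup _ _)).
- move=> x [Lx [n [n0 Lxn]]]; split; first exact: lcsV.
  by exists n; split => //; rewrite -gpowV; apply: lcsV.
Qed.

Lemma torG_normal : is_normal T.
Proof.
move=> x y [Lx [n [n0 Lxn]]]; split; first exact: lcsJ.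
by exists n; split => //; rewrite -gpow_conj; apply: lcsJ.
Qed.

Lemma lcs_torG x : L K.+1 x -> T x.
Proof. by move=> Lx; split; [exact: lcsS | exists 1%N; rewrite /= gmulg1]. Qed.

Lemma torG_hom (f : G -> G) (fM : group_hom f) x : T x -> T (f x).
Proof.
move=> [Lx [n [n0 Lxn]]]; split; first exact: lcs_hom.
by exists n; split => //; rewrite -(hom_gpow fM); apply: lcs_hom.
Qed.

End Torsion.

Local Open Scope ring_scope.

Definition additive_on (G : grp) (H : G -> Prop) (V : zmodType) (S : G -> V) :=
  is_subgroup H /\ forall x y, H x -> H y -> S (x ** y) = S x + S y.

Lemma eq_additive_on (G : grp) (H : G -> Prop) (V : zmodType) (S S' : G -> V) :
  S =1 S' -> additive_on H S -> additive_on H S'.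
Proof. by move=> SS' [sgH SM]; split=> // x y Hx Hy; rewrite -!SS' SM. Qed.

Section AdditiveOn.
Variables (G : grp) (V : zmodType) (H : G -> Prop) (S : G -> V).
Hypothesis addS : additive_on H S.
Local Notation sgH := addS.1.

Lemma additive_on1 : S (gone G) = 0.
Proof.
have H1 := subgroup1 sgH.
by apply: (@addrI _ (S (gone G))); rewrite addr0 -addS.2 // gmulg1.
Qed.

Lemma additive_onV x : H x -> S (ginv x) = - S x.
Proof.
move=> Hx; apply/eqP; rewrite -addr_eq0 -addS.2 ?gmulVg ?additive_on1 //.
exact: (subgroupV sgH Hx).
Qed.

Lemma additive_on_gpow x n : H x -> S (gpow x n) = S x *+ n.
Proof.
move=> Hx; elim: n => [|n IH] /=; first exact: additive_on1.
by rewrite addS.2 ?IH ?mulrS //; exact: (subgroup_gpow sgH _ Hx).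
Qed.

Lemma additive_on_gzpow x a : H x -> S (gzpow x a) = S x *~ a.
Proof.
move=> Hx; case: a => n; rewrite /gzpow; first exact: additive_on_gpow.
have Hxn := subgroup_gpow sgH n.+1 Hx.
by rewrite additive_onV // additive_on_gpow // NegzE mulrNz.
Qed.

Lemma additive_on_prodz_seq (I : Type) (s : seq I) (g : I -> G) a :
  (forall j, H (g j)) -> S (prodz_seq s g a) = \sum_(j <- s) S (g j) *~ a j.
Proof.
move=> Hg; elim: s => [|j s IH] /=; first by rewrite big_nil additive_on1.
rewrite big_cons addS.2 ?IH ?additive_on_gzpow //; first exact: (subgroup_gzpow sgH).
exact: (subgroup_prodz_seq sgH).
Qed.

End AdditiveOn.

Section Coordinates.
Variables (G : grp) (K m : nat) (g : 'I_m -> G).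
Hypothesis gB : tf_basis K.+1 g.
Local Notation L := (@lcs G).
Local Notation T := (@torG G K.+1).
Implicit Types (x y : G) (v : 'rV[int]_m).

(* Meaningful only on [L K], the paper's G_{K+1}; elsewhere an arbitrary row. *)
Definition tf_coord x : 'rV[int]_m :=
  \row_k epsilon (inhabits (fun _ => 0)) (fun a => T (x ** ginv (prodz g a))) k.

Lemma basis_lcs j : L K (g j). Proof. by case: gB => + _ _; apply. Qed.

Lemma prodz_seq_lcs (s : seq 'I_m) a : L K (prodz_seq s g a).
Proof. exact: (subgroup_prodz_seq (@lcs_subgroup _ K) _ _ basis_lcs). Qed.

Lemma tf_coordP x : L K x -> T (x ** ginv (prodz g (tf_coord x 0))).
Proof.
move=> Lx; pose P a := T (x ** ginv (prodz g a)).
have -> : prodz g (tf_coord x 0) = prodz g (epsilon (inhabits (fun _ => 0)) P).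
  by rewrite !prodzE; apply: eq_prodz_seq => k; rewrite mxE.
by apply: (epsilon_spec _ P); case: gB => _ + _; apply.
Qed.

Lemma tf_coord_unique x v :
  L K x -> T (x ** ginv (prodz g (v 0))) -> tf_coord x = v.
Proof.
move=> Lx Tv; have sgT := torG_subgroup G K.
have : T (prodz g (tf_coord x 0) ** ginv (prodz g (v 0))).
  move: (subgroupM sgT (subgroupV sgT (tf_coordP Lx)) Tv); congr T; gsimpl.
by case: gB => _ _ /[apply] e; apply/rowP => k; rewrite e.
Qed.

Lemma prodz_seqD_mod (s : seq 'I_m) (a b : 'I_m -> int) :
  eqmod (L K.+1) (prodz_seq s g a ** prodz_seq s g b)
                 (prodz_seq s g (fun k => a k + b k)).
Proof.
have sgL := @lcs_subgroup G K.+1; have nL := @lcs_normal G K.+1.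
have refl := eqmod_refl sgL.
elim: s => [|j s IH] /=; first by rewrite gmulg1; apply: refl.
rewrite gzpowD.
set Pa := prodz_seq s g a; set Pb := prodz_seq s g b.
set xa := gzpow (g j) (a j); set xb := gzpow (g j) (b j).
have -> : xa ** Pa ** (xb ** Pb) = xa ** (Pa ** xb) ** Pb by gsimpl.
apply: (eqmod_trans sgL (_ : eqmod _ _ (xa ** (xb ** Pa) ** Pb))).
  apply: (eqmodM sgL nL _ (refl _)); apply: (eqmodM sgL nL (refl _)).
  by apply: eqmod_lcs_commute; apply: prodz_seq_lcs.
have -> : xa ** (xb ** Pa) ** Pb = xa ** xb ** (Pa ** Pb) by gsimpl.
exact: (eqmodM sgL nL (refl _)).
Qed.

Lemma tf_coordD x y : L K x -> L K y -> tf_coord (x ** y) = tf_coord x + tf_coord y.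
Proof.
move=> Lx Ly; apply: tf_coord_unique; first exact: lcsM.
have sgT := torG_subgroup G K; have nT := torG_normal (G := G) (K := K).
apply: (eqmod_trans sgT (eqmodM sgT nT (tf_coordP Lx) (tf_coordP Ly))).
apply: lcs_torG; rewrite !prodzE.
rewrite (@eq_prodz_seq _ _ _ _ ((tf_coord x + tf_coord y) 0)
                       (fun k => tf_coord x 0 k + tf_coord y 0 k)) => [|k].
  exact: prodz_seqD_mod.
by rewrite mxE.
Qed.

Lemma tf_coord_additive : additive_on (L K) tf_coord.
Proof. by split; [exact: lcs_subgroup | exact: tf_coordD]. Qed.

Lemma tf_coord_torG x : T x -> tf_coord x = 0.
Proof.
move=> Tx; apply: tf_coord_unique; first by case: Tx.
have -> : prodz g ((0 : 'rV[int]_m) 0) = gone G.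
  rewrite prodzE (@eq_prodz_seq _ _ _ _ _ (fun _ => 0)) => [|k]; last by rewrite mxE.
  by elim: (enum 'I_m) => //= j s ->; rewrite gmulg1.
by rewrite ginv1 gmulg1.
Qed.

Lemma tf_coord_lcs x : L K.+1 x -> tf_coord x = 0.
Proof. by move=> Lx; apply/tf_coord_torG/lcs_torG. Qed.

Lemma tf_coord_eqmod x y : L K y -> eqmod T x y -> tf_coord x = tf_coord y.
Proof.
move=> Ly Txy; have Lxy : L K (x ** ginv y) by case: Txy.
have -> : x = (x ** ginv y) ** y by gsimpl.
by rewrite tf_coordD // tf_coord_torG // add0r.
Qed.

Lemma tf_coord_prodz v : tf_coord (prodz g (v 0)) = v.
Proof.
apply: tf_coord_unique; first by rewrite prodzE; apply: prodz_seq_lcs.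
by rewrite gmulgV; apply: subgroup1 (torG_subgroup G K).
Qed.

Lemma tf_coord_basis j : tf_coord (g j) = delta_mx 0 j.
Proof.
rewrite -[RHS]tf_coord_prodz prodzE.
rewrite (additive_on_prodz_seq tf_coord_additive _ _ basis_lcs).
rewrite big_enum /= (bigD1 j) //= big1 ?addr0 => [|k kj].
  by rewrite mxE !eqxx mulr1z.
by rewrite mxE (negbTE kj) andbF mulr0z.
Qed.

Section InducedMatrix.
Variables (f : G -> G) (fM : group_hom f).

Lemma tf_coord_hom M : induced_matrix f K.+1 g M ->
  forall x, L K x -> tf_coord (f x) = tf_coord x *m M.
Proof.
move=> fgM x Lx.
have tf_coord_fg j : tf_coord (f (g j)) = row j M.
  apply: tf_coord_unique; first exact/(lcs_hom fM)/basis_lcs.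
  by rewrite prodzE (@eq_prodz_seq _ _ _ _ _ (M j)) => [|k]; [exact: fgM | rewrite mxE].
have fx : eqmod T (f x) (f (prodz g (tf_coord x 0))).
  by rewrite /eqmod -(homV fM) -fM; apply: (torG_hom fM); apply: tf_coordP.
rewrite (tf_coord_eqmod _ fx); last first.
  by apply: (lcs_hom fM); rewrite prodzE; apply: prodz_seq_lcs.
rewrite prodzE (hom_prodz_seq fM) (additive_on_prodz_seq tf_coord_additive); last first.
  by move=> j; apply/(lcs_hom fM)/basis_lcs.
rewrite big_enum /= mulmx_sum_row; apply: eq_bigr => j _.
by rewrite tf_coord_fg -scaler_int intz.
Qed.

Lemma tf_coord_iter M : induced_matrix f K.+1 g M ->
  forall n x, L K x -> tf_coord (iter n f x) = tf_coord x *m M ^+ n.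
Proof.
move=> fgM n x Lx; elim: n => [|n IH]; first by rewrite expr0 mulmx1.
by rewrite iterS (tf_coord_hom fgM (lcs_hom (iter_hom fM n) Lx)) IH exprSr mulmxA.
Qed.

Lemma exists_induced_matrix : exists M, induced_matrix f K.+1 g M.
Proof.
exists (\matrix_(j, k) tf_coord (f (g j)) 0 k) => j.
move: (tf_coordP (lcs_hom fM (basis_lcs j))); congr T; congr (_ ** ginv _).
by rewrite !prodzE; apply: eq_prodz_seq => k; rewrite mxE.
Qed.

End InducedMatrix.

Lemma induced_matrix_inv (f f' : G -> G) M M' : group_hom f -> group_hom f' ->
  cancel f f' -> induced_matrix f K.+1 g M -> induced_matrix f' K.+1 g M' ->
  M *m M' = 1%:M.
Proof.
move=> fM f'M ff' fgM f'gM'; apply/row_matrixP => j.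
rewrite !rowE mulmx1 mulmxA -tf_coord_basis -(tf_coord_hom fM fgM (basis_lcs j)).
by rewrite -(tf_coord_hom f'M f'gM' (lcs_hom fM (basis_lcs j))) ff'.
Qed.

End Coordinates.

Section PolyBounded.
Variable R : numDomainType.
Implicit Types (u v : nat -> R) (C : R).

Definition poly_bounded u := exists C (d : nat), forall n, `|u n| <= C * n.+1%:R ^+ d.

Lemma eq_poly_bounded u v : u =1 v -> poly_bounded u <-> poly_bounded v.
Proof. by move=> uv; split=> -[C [d B]]; exists C, d => n; [rewrite -uv | rewrite uv]. Qed.

Lemma poly_bound_ge0 u C d : (forall n, `|u n| <= C * n.+1%:R ^+ d) -> 0 <= C.
Proof. by move/(_ 0%N); rewrite expr1n mulr1; apply: le_trans. Qed.

Lemma natrX_le (n d e : nat) : n.+1%:R ^+ d <= n.+1%:R ^+ (d + e) :> R.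
Proof. by rewrite exprD ler_peMr ?exprn_ge0 ?exprn_ege1 ?ler1n. Qed.

Lemma poly_boundedW u v :
  (forall n, `|u n| <= `|v n|) -> poly_bounded v -> poly_bounded u.
Proof. by move=> uv [C [d vC]]; exists C, d => n; apply: le_trans (vC n). Qed.

Lemma poly_bounded_ler u v : (forall n, 0 <= u n) -> (forall n, u n <= v n) ->
  poly_bounded v -> poly_bounded u.
Proof.
move=> u_ge0 uv; apply: poly_boundedW => n.
by rewrite !ger0_norm // (le_trans (u_ge0 n) (uv n)).
Qed.

Lemma poly_bounded_norm u : poly_bounded u -> poly_bounded (fun n => `|u n|).
Proof. by apply: poly_boundedW => n; rewrite normr_id. Qed.

Lemma poly_bounded_cst c : poly_bounded (fun=> c).
Proof. by exists `|c|, 0%N => n; rewrite expr0 mulr1. Qed.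

Lemma poly_boundedD u v : poly_bounded u -> poly_bounded v -> poly_bounded (u \+ v).
Proof.
move=> [C1 [d1 uC]] [C2 [d2 vC]]; exists (C1 + C2), (d1 + d2)%N => n.
have [C1_ge0 C2_ge0] := (poly_bound_ge0 uC, poly_bound_ge0 vC).
apply: le_trans (ler_normD _ _) _; rewrite mulrDl; apply: lerD.
  by apply: le_trans (uC n) _; rewrite ler_wpM2l ?natrX_le.
by apply: le_trans (vC n) _; rewrite addnC ler_wpM2l ?natrX_le.
Qed.

Lemma poly_boundedM u v : poly_bounded u -> poly_bounded v -> poly_bounded (u \* v).
Proof.
move=> [C1 [d1 uC]] [C2 [d2 vC]]; exists (C1 * C2), (d1 + d2)%N => n.
by rewrite normrM exprD mulrACA ler_pM.
Qed.

Lemma poly_bounded_sum (I : Type) (s : seq I) (u : I -> nat -> R) :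
  (forall i, poly_bounded (u i)) -> poly_bounded (fun n => \sum_(i <- s) u i n).
Proof.
move=> uB; elim: s => [|i s IH].
  by apply: poly_boundedW (poly_bounded_cst 0) => n; rewrite big_nil.
by apply: poly_boundedW (poly_boundedD (uB i) IH) => n; rewrite big_cons.
Qed.

Lemma poly_bounded_prod (I : Type) (s : seq I) (u : I -> nat -> R) :
  (forall i, poly_bounded (u i)) -> poly_bounded (fun n => \prod_(i <- s) u i n).
Proof.
move=> uB; elim: s => [|i s IH].
  by apply: poly_boundedW (poly_bounded_cst 1) => n; rewrite big_nil.
by apply: poly_boundedW (poly_boundedM (uB i) IH) => n; rewrite big_cons.
Qed.

Definition vnorm m (v : 'rV[R]_m) := \sum_k `|v 0 k|.
Definition mxnorm m n (A : 'M[R]_(m, n)) := \sum_i vnorm (row i A).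

Lemma vnorm_ge0 m (v : 'rV[R]_m) : 0 <= vnorm v.
Proof. exact: sumr_ge0. Qed.

Lemma vnorm0 m : vnorm (0 : 'rV[R]_m) = 0.
Proof. by apply: big1 => k _; rewrite mxE normr0. Qed.

Lemma vnormN m (v : 'rV[R]_m) : vnorm (- v) = vnorm v.
Proof. by apply: eq_bigr => k _; rewrite mxE normrN. Qed.

Lemma vnormD m (u v : 'rV[R]_m) : vnorm (u + v) <= vnorm u + vnorm v.
Proof. by rewrite /vnorm -big_split /=; apply: ler_sum => k _; rewrite mxE ler_normD. Qed.

Lemma vnorm_sum m (I : Type) (s : seq I) (v : I -> 'rV[R]_m) :
  vnorm (\sum_(i <- s) v i) <= \sum_(i <- s) vnorm (v i).
Proof.
elim: s => [|i s IH]; first by rewrite !big_nil vnorm0.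
by rewrite !big_cons; apply: le_trans (vnormD _ _) _; rewrite lerD2l.
Qed.

Lemma vnormZ m c (v : 'rV[R]_m) : vnorm (c *: v) = `|c| * vnorm v.
Proof. by rewrite /vnorm mulr_sumr; apply: eq_bigr => k _; rewrite mxE normrM. Qed.

Lemma mxnorm_ge0 m n (A : 'M[R]_(m, n)) : 0 <= mxnorm A.
Proof. by apply: sumr_ge0 => i _; apply: vnorm_ge0. Qed.

Lemma vnorm_row_le m n (A : 'M[R]_(m, n)) i : vnorm (row i A) <= mxnorm A.
Proof. by rewrite /mxnorm (bigD1 i) //= lerDl sumr_ge0 // => j _; apply: vnorm_ge0. Qed.

Lemma normr_vnorm_entry m (v : 'rV[R]_m) k : `|v 0 k| <= vnorm v.
Proof. by rewrite /vnorm (bigD1 k) //= lerDl sumr_ge0. Qed.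

Lemma vnorm_mulmx m n (v : 'rV[R]_m) (A : 'M[R]_(m, n)) :
  vnorm (v *m A) <= vnorm v * mxnorm A.
Proof.
rewrite mulmx_sum_row; apply: le_trans (vnorm_sum _ _) _.
rewrite [vnorm v]/vnorm mulr_suml; apply: ler_sum => i _.
by rewrite vnormZ ler_wpM2l ?vnorm_row_le.
Qed.

End PolyBounded.

Lemma mxnorm_intr (R : numDomainType) m n (A : 'M[int]_(m, n)) :
  mxnorm (map_mx (intr : int -> R) A) = (mxnorm A)%:~R.
Proof.
rewrite /mxnorm /vnorm rmorph_sum; apply: eq_bigr => i _.
by rewrite rmorph_sum; apply: eq_bigr => j _; rewrite !mxE -intr_norm.
Qed.

Lemma poly_bounded_intr (R : archiNumDomainType) (u : nat -> int) :
  poly_bounded (fun n => (u n)%:~R : R) <-> poly_bounded u.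
Proof.
split=> [[C [d uC]] | [C [d uC]]].
  exists (Num.bound C)%:Z, d => n; rewrite -(ler_int R) intr_norm rmorphM rmorphXn /=.
  apply: le_trans (uC n) _; rewrite natz ler_wpM2r ?exprn_ge0 // ltW //.
  exact/archi_boundP/(poly_bound_ge0 uC).
exists C%:~R, d => n.
have -> : C%:~R * n.+1%:R ^+ d = (C * n.+1%:R ^+ d)%:~R :> R.
  by rewrite rmorphM rmorphXn rmorph_nat.
by rewrite -intr_norm ler_int.
Qed.

Lemma natrX_succ_le (R : numDomainType) (n d : nat) :
  n.+1%:R ^+ d * n.+2%:R <= n.+2%:R ^+ d.+1 :> R.
Proof.
rewrite -!natrX -natrM ler_nat expnSr leq_mul2r; apply/orP; right.
by case: d => [|d] //; rewrite leq_exp2r.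
Qed.

(* If [u (n+1) - a u n] grows polynomially and [|a| <= 1], the bound
   [|u n| <= (|u 0| + C) (n+1)^(d+1)] follows by induction. *)
Lemma poly_bounded_step (R : numDomainType) (a : R) (u : nat -> R) : `|a| <= 1 ->
  poly_bounded (fun n => u n.+1 - a * u n) -> poly_bounded u.
Proof.
move=> a_le1 [C [d uC]]; have C_ge0 := poly_bound_ge0 uC.
exists (`|u 0%N| + C), d.+1; elim=> [|n IH]; first by rewrite expr1n mulr1 lerDl.
set D := `|u 0%N| + C.
have -> : u n.+1 = a * u n + (u n.+1 - a * u n) by ring.
apply: le_trans (ler_normD _ _) _.
have au_le : `|a * u n| <= D * n.+1%:R ^+ d.+1.
  by rewrite normrM; apply: le_trans IH; rewrite ler_piMl.
have CD : C * n.+1%:R ^+ d <= D * n.+1%:R ^+ d by rewrite ler_wpM2r ?exprn_ge0 ?lerDr.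
apply: le_trans (lerD au_le (le_trans (uC n) CD)) _.
rewrite -mulrDr ler_wpM2l ?addr_ge0 //.
apply: le_trans (natrX_succ_le R n d).
by rewrite exprSr -[n.+2]addn1 natrD mulrDr mulr1.
Qed.

Lemma mulXsubC_recurrence (R : comNzRingType) (q : {poly R}) (a : R) (u : nat -> R) N n :
  (size q <= N)%N ->
  \sum_(i < N.+1) (q * ('X - a%:P))`_i * u (n + i)%N =
  \sum_(i < N) q`_i * (u (n + i).+1 - a * u (n + i)%N).
Proof.
move=> qN; rewrite mulrBr.
under eq_bigr do rewrite coefB coefMX coefMC mulrBl.
rewrite sumrB big_ord_recl /= mul0r add0r big_ord_recr /=.
rewrite (nth_default 0 qN) !mul0r addr0 -sumrB; apply: eq_bigr => i _.
by rewrite /bump /= addnS; ring.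
Qed.

(* Factor [p = q ('X - a)] with [|a| <= 1]: then [n |-> u (n+1) - a u n]
   satisfies the recurrence of [q], so induction on [size p] applies. *)
Lemma poly_bounded_recurrence (R : numClosedFieldType) N (p : {poly R}) (u : nat -> R) :
  p != 0 -> (size p <= N)%N -> (forall z, root p z -> `|z| <= 1) ->
  (forall n, \sum_(i < N) p`_i * u (n + i)%N = 0) -> poly_bounded u.
Proof.
elim: N p u => [|N IH] p u p0 pN p_roots u_rec.
  by move: p0; rewrite -size_poly_eq0 -leqn0 pN.
have [p1|p_ne1] := eqVneq (size p) 1%N.
  apply: poly_boundedW (poly_bounded_cst 0) => n; rewrite normr0 normr_le0.
  move: (u_rec n); rewrite big_ord_recl big1 ?addr0 /= ?addn0 => [|i _]; last first.
    by rewrite nth_default ?mul0r // p1.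
  have p0_ne0 : p`_0 != 0 by move: p0; rewrite -lead_coef_eq0 lead_coefE p1.
  by move/eqP; rewrite mulf_eq0 (negPf p0_ne0).
have [a pa] := closed_rootP p p_ne1.
have [q p_eq] := factor_theorem p a pa.
have q0 : q != 0 by apply: contraNneq p0 => q0; rewrite p_eq q0 mul0r.
have size_p : size p = (size q).+1.
  by rewrite p_eq size_Mmonic ?monicXsubC // size_XsubC addn2.
apply: (poly_bounded_step (p_roots a pa)); apply: (IH q) => //.
- by rewrite -ltnS -size_p.
- by move=> z qz; apply: p_roots; rewrite p_eq rootM qz.
- by move=> n; rewrite -mulXsubC_recurrence -?p_eq // -ltnS -size_p.
Qed.

Lemma horner_mx_sum (R : comNzRingType) n (A : 'M[R]_n.+1) p :
  horner_mx A p = \sum_(i < size p) p`_i *: A ^+ i.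
Proof.
rewrite -{1}[p]coefK poly_def raddf_sum; apply: eq_bigr => i _.
by rewrite /= horner_mxZ rmorphXn /= horner_mx_X.
Qed.

(* By Cayley-Hamilton each entry of [A ^+ n] satisfies the linear recurrence
   whose characteristic polynomial is [char_poly A]. *)
Lemma poly_bounded_mxpowers (R : numClosedFieldType) m (A : 'M[R]_m) :
  (forall a, eigenvalue A a -> `|a| <= 1) -> poly_bounded (fun n => mxnorm (A ^+ n)).
Proof.
case: m A => [|m] A A_eig.
  by apply: poly_boundedW (poly_bounded_cst 0) => n; rewrite /mxnorm big_ord0.
have entry_bounded i k : poly_bounded (fun n => (A ^+ n) i k).
  apply: (@poly_bounded_recurrence _ (size (char_poly A)) (char_poly A)) => //.
  - exact: monic_neq0 (char_poly_monic A).
  - by move=> z; rewrite -eigenvalue_root_char; apply: A_eig.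
  - move=> n; have := congr1 (fun B => (A ^+ n * B) i k) (Cayley_Hamilton A).
    rewrite /= mulr0 horner_mx_sum mulr_sumr summxE mxE => CH.
    by apply: etrans CH; apply: eq_bigr => j _; rewrite -scalerAr -exprD mxE.
have entries_bounded : poly_bounded (fun n => \sum_i \sum_k `|(A ^+ n) i k|).
  by apply: poly_bounded_sum => i; apply: poly_bounded_sum => k; apply: poly_bounded_norm.
apply: poly_boundedW entries_bounded => n.
suff -> : mxnorm (A ^+ n) = \sum_i \sum_k `|(A ^+ n) i k| by [].
by apply: eq_bigr => i _; apply: eq_bigr => k _; rewrite mxE.
Qed.

Lemma bernoulli_ineq (R : numDomainType) (e : R) t : 0 <= e -> 1 + t%:R * e <= (1 + e) ^+ t.
Proof.
move=> e_ge0; elim: t => [|t IH]; first by rewrite mul0r addr0 expr0.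
apply: le_trans (_ : (1 + t%:R * e) * (1 + e) <= _); last first.
  by rewrite exprSr ler_wpM2r ?addr_ge0.
rewrite -subr_ge0.
have -> : (1 + t%:R * e) * (1 + e) - (1 + t.+1%:R * e) = t%:R * (e * e).
  by rewrite -addn1 natrD; ring.
by rewrite mulr_ge0 ?mulr_ge0.
Qed.

Lemma expr_gt_poly (R : archiNumFieldType) (r B : R) d : 1 < r -> 0 <= B ->
  exists n, B * n.+1%:R ^+ d < r ^+ n.
Proof.
move=> r_gt1 B_ge0; set e := r - 1.
have e_gt0 : 0 < e by rewrite subr_gt0.
have ed_gt0 : 0 < e ^+ d.+1 by apply: exprn_gt0.
set X := B * d.+2%:R ^+ d / e ^+ d.+1.
have X_ge0 : 0 <= X.
  by rewrite /X; apply: divr_ge0; [apply: mulr_ge0 => //; apply/exprn_ge0/ler0n | exact: ltW].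
set t := Num.bound X; have X_lt : X < t%:R := archi_boundP X_ge0.
(* Witness [n = t (d+1)]: then [B (n+1)^d <= X e^(d+1) t^d < (t e)^(d+1) <= r^n]. *)
exists (t * d.+1)%N.
have n_le : (t * d.+1).+1%:R ^+ d <= (d.+2 * t)%N%:R ^+ d :> R.
  rewrite lerXn2r ?nnegrE ?ler0n // ler_nat.
  by rewrite mulnC [in X in (_ < X)%N]mulSn addnC -addn1 leq_add2l.
apply: le_lt_trans (ler_wpM2l B_ge0 n_le) _.
have -> : B * (d.+2 * t)%N%:R ^+ d = X * e ^+ d.+1 * t%:R ^+ d.
  by rewrite /X divfK ?expf_neq0 ?lt0r_neq0 // natrM exprMn mulrA.
apply: lt_le_trans (_ : t%:R * e ^+ d.+1 * t%:R ^+ d <= _).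
  by rewrite ltr_pM2r ?exprn_gt0 ?ltr0n // ltr_pM2r.
have -> : t%:R * e ^+ d.+1 * t%:R ^+ d = (t%:R * e) ^+ d.+1.
  by rewrite exprMn [t%:R ^+ d.+1]exprSr; ring.
have r_eq : r = 1 + e by rewrite /e; ring.
rewrite exprM r_eq; apply: lerXn2r; rewrite ?nnegrE.
- by apply: mulr_ge0; [apply: ler0n | apply: ltW].
- by apply: exprn_ge0; apply: addr_ge0 => //; apply: ltW.
- by apply: le_trans (bernoulli_ineq t (ltW e_gt0)); rewrite lerDr.
Qed.

Lemma eigenvalue_le1 (R : archiClosedFieldType) m (A : 'M[R]_m) a :
  poly_bounded (fun n => mxnorm (A ^+ n)) -> eigenvalue A a -> `|a| <= 1.
Proof.
move=> [C [d AC]] /eigenvalueP [v vA v0].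
have [k vk] : exists k, v 0 k != 0.
  apply/existsP; apply: contraR v0 => /existsPn v0.
  by apply/eqP/rowP => k; rewrite mxE; apply/eqP/negbNE.
have vAn n : v *m A ^+ n = a ^+ n *: v.
  elim: n => [|n IH]; first by rewrite expr0 mulmx1 scale1r.
  by rewrite exprSr -mulmxE mulmxA IH -scalemxAl vA scalerA -exprSr.
have vk_gt0 : 0 < `|v 0 k| by rewrite normr_gt0.
have bound n : `|a| ^+ n * `|v 0 k| <= vnorm v * C * n.+1%:R ^+ d.
  rewrite -normrX -normrM -mulrA.
  have -> : a ^+ n * v 0 k = (v *m A ^+ n) 0 k by rewrite vAn mxE.
  apply: le_trans (normr_vnorm_entry _ _) _; apply: le_trans (vnorm_mulmx _ _) _.
  by rewrite ler_wpM2l ?vnorm_ge0 // -[mxnorm _]ger0_norm ?mxnorm_ge0.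
rewrite real_leNgt ?normr_real ?real1 //; apply/negP => a_gt1.
have B_ge0 : 0 <= vnorm v * C / `|v 0 k|.
  by rewrite divr_ge0 ?mulr_ge0 ?vnorm_ge0 ?normr_ge0 ?(poly_bound_ge0 AC).
have [n] := expr_gt_poly d a_gt1 B_ge0.
rewrite -(ltr_pM2r vk_gt0) mulrAC divfK ?lt0r_neq0 //.
by move/lt_geF; rewrite bound.
Qed.

Lemma eigenvalue_inv (F : fieldType) m (A B : 'M[F]_m) b :
  A *m B = 1%:M -> eigenvalue B b -> b != 0 /\ eigenvalue A b^-1.
Proof.
move=> AB /eigenvalueP [v vB v0].
have vA : v = b *: (v *m A) by rewrite scalemxAl -vB -mulmxA (mulmx1C AB) mulmx1.
have b0 : b != 0 by apply: contraNneq v0 => b0; rewrite vA b0 scale0r.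
split => //; apply/eigenvalueP; exists v => //.
by rewrite {2}vA scalerA mulVf // scale1r.
Qed.

Section LowerCentralGrowth.
Variables (G : grp) (phi : G -> G) (phiM : group_hom phi).
Variables (K m : nat) (g : 'I_m -> G) (gB : tf_basis K.+1 g).
Variables (m1 : nat) (g1 : 'I_m1 -> G) (g1B : tf_basis 1 g1) (M1 : 'M[int]_m1).
Hypotheses (phiM1 : induced_matrix phi 1 g1 M1)
           (M1_bounded : poly_bounded (fun n => mxnorm (M1 ^+ n))).
Local Notation L := (@lcs G).
Local Notation c := (tf_coord K g).
Local Notation c1 := (tf_coord 0 g1).

Lemma tf_coord_itcomm_additive k (h : G -> G) (post : seq G) :
  (k + size post)%N = K -> (forall x, L k (h x)) ->
  (forall x y, eqmod (L k.+1) (h (x ** y)) (h x ** h y)) ->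
  (forall u, L 1 u -> L k.+1 (h u)) ->
  additive_on (L 0) (fun x => c (itcomm post (h x))) /\
  forall u, L 1 u -> c (itcomm post (h u)) = 0.
Proof.
move=> kK Lh hM hL1.
have L_itcomm x : L K (itcomm post (h x)) by rewrite -kK; apply: itcomm_lcs.
split=> [|u L1u]; last first.
  by apply: (tf_coord_lcs gB); rewrite -kK -addSn; apply: itcomm_lcs; apply: hL1.
split=> [|x y _ _]; first exact: lcs_subgroup.
rewrite -(tf_coordD gB (L_itcomm x) (L_itcomm y)).
apply: (tf_coord_eqmod gB (lcsM (L_itcomm x) (L_itcomm y))).
apply: lcs_torG; rewrite -[K]kK.
have sgLk := @lcs_subgroup G (k + size post).+1.
apply: (eqmod_trans sgLk (_ : eqmod _ _ (itcomm post (h x ** h y)))).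
  by apply: itcomm_eqmod; [apply: Lh | apply: lcsM; apply: Lh | apply: hM].
exact: itcommM_mod.
Qed.

Definition lcomm (l : seq G) := if l is x :: r then itcomm r x else gone G.

Lemma lcomm_slot (pre post : seq G) : (size pre + size post)%N = K ->
  additive_on (L 0) (fun x => c (lcomm (pre ++ x :: post))) /\
  forall u, L 1 u -> c (lcomm (pre ++ u :: post)) = 0.
Proof.
case: pre => [|y pre] /= sizeK.
  apply: (@tf_coord_itcomm_additive 0 id) => // x y.
  exact: (eqmod_refl (@lcs_subgroup G 1)).
have lcomm_cat x : itcomm (pre ++ x :: post) y = itcomm post (comm (itcomm pre y) x).
  by rewrite /itcomm foldl_cat.
have Lw : L (size pre) (itcomm pre y) by have := @itcomm_lcs G pre 0 y I.
have [] := @tf_coord_itcomm_additive (size pre).+1 (comm (itcomm pre y)) post.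
- by rewrite addSn.
- by move=> x; apply: lcs_comm.
- by move=> x x'; apply: eqmod_commMr.
- by move=> u L1u; apply: lcs_comm_lcs1.
move=> addc c0; split => [|u L1u]; last by rewrite lcomm_cat c0.
by apply: eq_additive_on addc => x; rewrite lcomm_cat.
Qed.

(* [S] kills [t = x (prodz g1 (c1 x))^-1]: some power of [t] lies in [L 1],
   and integer rows are torsion-free. *)
Lemma additive_tf_coord1_expansion (S : G -> 'rV[int]_m) :
  additive_on (L 0) S -> (forall u, L 1 u -> S u = 0) ->
  forall x, S x = \sum_l S (g1 l) *~ c1 x 0 l.
Proof.
move=> addS S0 x; set t := x ** ginv (prodz g1 (c1 x 0)).
have [_ [n [n_gt0 L1tn]]] : torG 1 t := tf_coordP g1B (I : L 0 x).
have St : S t = 0.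
  apply/rowP => k; move/rowP/(_ k): (S0 _ L1tn).
  rewrite (additive_on_gpow addS) // mulmxnE !mxE => /eqP.
  by rewrite mulrn_eq0 eqn0Ngt n_gt0 => /eqP.
have x_eq : x = t ** prodz g1 (c1 x 0) by rewrite /t; gsimpl.
by rewrite {1}x_eq addS.2 // St add0r prodzE (additive_on_prodz_seq addS) // big_enum.
Qed.

Definition lcomm_bound : int :=
  \sum_(t : (K.+1).-tuple 'I_m1) vnorm (c (lcomm (map g1 t))).

(* Expanding the slots of [pre] one at a time in the level-1 basis. *)
Lemma vnorm_lcomm_le (pre : seq G) (ks : seq 'I_m1) : (size pre + size ks)%N = K.+1 ->
  vnorm (c (lcomm (pre ++ map g1 ks))) <= lcomm_bound * \prod_(x <- pre) vnorm (c1 x).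
Proof.
elim/last_ind: pre ks => [|pre x IH] ks sizeK.
  rewrite big_nil mulr1 /=; rewrite add0n in sizeK.
  have ksK : size ks == K.+1 by apply/eqP.
  have -> : ks = Tuple ksK by [].
  rewrite /lcomm_bound (bigD1 (Tuple ksK)) //= lerDl.
  by apply: sumr_ge0 => t _; apply: vnorm_ge0.
rewrite size_rcons in sizeK; rewrite cat_rcons big_rcons /=.
have slotK : (size pre + size (map g1 ks))%N = K by rewrite size_map; lia.
have [addS S0] := lcomm_slot slotK.
rewrite (additive_tf_coord1_expansion addS S0 x).
apply: le_trans (vnorm_sum _ _) _.
apply: le_trans (_ : \sum_l `|c1 x 0 l| * (lcomm_bound * \prod_(y <- pre) vnorm (c1 y)) <= _).
  apply: ler_sum => l _; rewrite -scaler_int intz vnormZ ler_wpM2l //.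
  by apply: (IH (l :: ks)); rewrite /=; lia.
by rewrite -mulr_suml mulrC -mulrA.
Qed.

Definition orbit_bounded x := poly_bounded (fun n => vnorm (c (iter n phi x))).

Lemma orbit1_bounded x : poly_bounded (fun n => vnorm (c1 (iter n phi x))).
Proof.
apply: poly_bounded_ler (poly_boundedM (poly_bounded_cst (vnorm (c1 x))) M1_bounded) => n.
  exact: vnorm_ge0.
by rewrite (tf_coord_iter g1B phiM phiM1 n (I : L 0 x)) vnorm_mulmx.
Qed.

Lemma orbit_bounded_lcomm l : size l = K.+1 -> orbit_bounded (lcomm l).
Proof.
move=> lK.
have lcomm_iter n : iter n phi (lcomm l) = lcomm (map (iter n phi) l).
  have phinM := iter_hom phiM n.
  by case: l {lK} => [|x r] /=; rewrite ?(hom1 phinM) ?(itcomm_hom phinM).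
have prod_bounded := poly_bounded_prod l (fun x => orbit1_bounded x).
apply: poly_bounded_ler (poly_boundedM (poly_bounded_cst lcomm_bound) prod_bounded) => n.
  exact: vnorm_ge0.
rewrite lcomm_iter; have := @vnorm_lcomm_le (map (iter n phi) l) [::].
by rewrite cats0 big_map size_map addn0; apply.
Qed.

Lemma orbit_bounded1 : orbit_bounded (gone G).
Proof.
apply: poly_boundedW (poly_bounded_cst 0) => n.
by rewrite (hom1 (iter_hom phiM n)) (additive_on1 (tf_coord_additive gB)) vnorm0.
Qed.

Lemma orbit_boundedM x y : L K x -> L K y ->
  orbit_bounded x -> orbit_bounded y -> orbit_bounded (x ** y).
Proof.
move=> Lx Ly xB yB; apply: poly_bounded_ler (poly_boundedD xB yB) => n.
  exact: vnorm_ge0.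
by rewrite (iter_hom phiM) (tf_coordD gB) ?vnormD //; apply: (lcs_hom (iter_hom phiM n)).
Qed.

Lemma orbit_boundedV x : L K x -> orbit_bounded x -> orbit_bounded (ginv x).
Proof.
move=> Lx; apply: poly_boundedW => n.
rewrite (homV (iter_hom phiM n)) (additive_onV (tf_coord_additive gB)) ?vnormN //.
exact: (lcs_hom (iter_hom phiM n)).
Qed.

Lemma orbit_bounded_eqmod x y : L K y -> eqmod (L K.+1) x y ->
  orbit_bounded y -> orbit_bounded x.
Proof.
move=> Ly xy; apply: poly_boundedW => n.
rewrite (tf_coord_eqmod gB (lcs_hom (iter_hom phiM n) Ly)) //.
apply: lcs_torG; rewrite /eqmod -(homV (iter_hom phiM n)) -(iter_hom phiM).
exact: (lcs_hom (iter_hom phiM n)).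
Qed.

Lemma orbit_bounded_itcomm k : (k <= K)%N -> forall w, L k w ->
  forall r, (k + size r)%N = K -> orbit_bounded (itcomm r w).
Proof.
elim: k => [|k IH] kK w Lw.
  by move=> r rK; apply: (@orbit_bounded_lcomm (w :: r)); rewrite /= -rK.
pose S w := forall r, (k.+1 + size r)%N = K -> orbit_bounded (itcomm r w).
have L_itcomm (r : seq G) v : (k.+1 + size r)%N = K -> L k.+1 v -> L K (itcomm r v).
  by move=> <-; apply: itcomm_lcs.
have L_mod (r : seq G) : (k.+1 + size r)%N = K -> L (k.+1 + size r).+1 = L K.+1 by move->.
suff [] : L k.+1 w /\ S w by [].
apply: (Lw (fun w => L k.+1 w /\ S w)); last first.
  move=> _ [x [y [Lx ->]]]; split; first exact: lcs_comm.
  by move=> r' r'K; apply: (IH _ x Lx (y :: r')) => //=; lia.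
split=> [|x y [Lx Sx] [Ly Sy]|x [Lx Sx]].
- by split=> [|r' _]; [exact: lcs1 | rewrite itcomm1; apply: orbit_bounded1].
- split=> [|r' r'K]; first exact: lcsM.
  have := itcommM_mod (r := r') Lx Ly; rewrite L_mod // => xy.
  apply: (orbit_bounded_eqmod _ xy); first by apply: lcsM; apply: L_itcomm.
  by apply: orbit_boundedM; [apply: L_itcomm | apply: L_itcomm | apply: Sx | apply: Sy].
- split=> [|r' r'K]; first exact: lcsV.
  have := itcommV_mod (r := r') Lx; rewrite L_mod // => xV.
  apply: (orbit_bounded_eqmod _ xV); first by apply: lcsV; apply: L_itcomm.
  by apply: orbit_boundedV; [apply: L_itcomm | apply: Sx].
Qed.

Lemma poly_bounded_induced_matrix M : induced_matrix phi K.+1 g M ->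
  poly_bounded (fun n => mxnorm (M ^+ n)).
Proof.
move=> phiM'; apply: poly_bounded_sum => j.
have gjB : orbit_bounded (g j).
  by apply: (@orbit_bounded_itcomm K (leqnn K) _ (basis_lcs gB j) [::]); rewrite addn0.
apply: poly_boundedW gjB => n.
by rewrite (tf_coord_iter gB phiM phiM' n (basis_lcs gB j)) (tf_coord_basis gB) -rowE.
Qed.

End LowerCentralGrowth.

Lemma cmx_mulmx_eq1 m (A B : 'M[int]_m) : A *m B = 1%:M -> cmx A *m cmx B = 1%:M.
Proof. by move=> AB; rewrite /cmx -map_mxM AB map_mx1. Qed.

Lemma poly_bounded_cmx m (M : 'M[int]_m) :
  poly_bounded (fun n => mxnorm (cmx M ^+ n)) <-> poly_bounded (fun n => mxnorm (M ^+ n)).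
Proof.
rewrite -(poly_bounded_intr algC); apply: eq_poly_bounded => n.
rewrite -mxnorm_intr; congr mxnorm; elim: n => [|n IH].
  by rewrite !expr0 /cmx map_mx1.
by rewrite !exprSr -!mulmxE /cmx map_mxM -IH.
Qed.

Lemma induced_matrix_eigenvalue_le1 (G : grp) (phi : G -> G) (phiM : group_hom phi)
    m1 (g1 : 'I_m1 -> G) M1 K m (g : 'I_m -> G) M :
  tf_basis 1 g1 -> induced_matrix phi 1 g1 M1 ->
  tf_basis K.+1 g -> induced_matrix phi K.+1 g M ->
  (forall b, eigenvalue (cmx M1) b -> `|b| <= 1) ->
  forall a, eigenvalue (cmx M) a -> `|a| <= 1.
Proof.
move=> g1B phiM1 gB phiMK M1_eig a; apply: eigenvalue_le1; apply/poly_bounded_cmx.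
apply: (poly_bounded_induced_matrix phiM gB g1B phiM1) phiMK.
exact/poly_bounded_cmx/poly_bounded_mxpowers.
Qed.

Unset Implicit Arguments.

Theorem lemma7p1 (G : grp) (phi : G -> G)
  (phi_hom : group_hom phi) (phi_bij : bijective phi)
  (fgG : finitely_generated G) (nilG : nilpotent G)
  (m1 : nat) (g1 : 'I_m1 -> G) (M1 : 'M[int]_m1)
  (b1 : tf_basis 1 g1) (hM1 : induced_matrix phi 1 g1 M1)
  (ev1 : forall a : algC, eigenvalue (cmx M1) a -> `|a| = 1) :
  forall (i : nat), (1 <= i)%N ->
  forall (m : nat) (g : 'I_m -> G) (M : 'M[int]_m),
    tf_basis i g -> induced_matrix phi i g M ->
    forall a : algC, eigenvalue (cmx M) a -> `|a| = 1.
Proof.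
case=> [//|K] _ m g M gB hM a a_eig.
have [psi phiK psiK] := phi_bij.
have psi_hom : group_hom psi.
  by move=> x y; rewrite -{1}(psiK x) -{1}(psiK y) -phi_hom phiK.
have a_le1 : `|a| <= 1.
  by apply: (induced_matrix_eigenvalue_le1 phi_hom b1 hM1 gB hM) a_eig => b /ev1 ->.
have [M1' psiM1'] := exists_induced_matrix b1 psi_hom.
have [M' psiM'] := exists_induced_matrix gB psi_hom.
have M1M1' := induced_matrix_inv b1 phi_hom psi_hom phiK hM1 psiM1'.
have M'M := mulmx1C (induced_matrix_inv gB phi_hom psi_hom phiK hM psiM').
have [a_ne0 a_inv] := eigenvalue_inv (cmx_mulmx_eq1 M'M) a_eig.
have M1'_eig b : eigenvalue (cmx M1') b -> `|b| <= 1.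
  move=> b_eig; have [_ /ev1] := eigenvalue_inv (cmx_mulmx_eq1 M1M1') b_eig.
  by rewrite normfV => /eqP; rewrite invr_eq1 => /eqP ->.
have := induced_matrix_eigenvalue_le1 psi_hom b1 psiM1' gB psiM' M1'_eig a_inv.
rewrite normfV invr_le1 ?unitfE ?normr_eq0 ?normr_gt0 // => a_ge1.
by apply: le_anti; rewrite a_le1 a_ge1.
Qed.
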